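(* Fix $\alpha\in(0,1/2)$ and treatment qualities $q_1,q_3\in(0,1)$. Let $M(q_1,q_3)=\frac{2(4\alpha+1)}{3(1-q_3)}+\frac{2(3-4\alpha)}{3(1-q_1)}$ be the treatment's steady-state total user population and $Q(q_1,q_3)=\dfrac{q_3\frac{2(4\alpha+1)}{3(1-q_3)}+q_1\frac{2(3-4\alpha)}{3(1-q_1)}}{M(q_1,q_3)}$ its steady-state average recommendation quality (ARQ). Let $m^*=\frac{16(4\alpha+3)}{9}$ and $\overline{q}^*=\frac{8\alpha+3}{8\alpha+6}$ be the status quo's steady-state total population and ARQ. Then $M(q_1,q_3)>m^*$ if and only if $Q(q_1,q_3)>\overline{q}^*$, and $M(q_1,q_3)<m^*$ if and only if $Q(q_1,q_3)<\overline{q}^*$.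
   Context: Model: users have types $(x,e)\in\{1/4,3/4\}^2$; each period a unit mass of new users arrives with type distribution $F(3/4,3/4)=F(1/4,1/4)=\alpha$, $F(3/4,1/4)=F(1/4,3/4)=1/2-\alpha$. An algorithm assigns recommendation quality $q(x)\in(0,1)$ to segment $x$; a user of type $(x,e)$ churns each period with probability $(1-q(x))(1-e)$. The steady-state mass of type $(x,e)$ is $m(x,e)=F(x,e)/((1-q(x))(1-e))$; total population is $\sum_{x,e}m(x,e)$ and steady-state ARQ is $\sum_x q(x)\sum_e m(x,e)/\sum_{x,e}m(x,e)$. The status quo is $q^*(x)=x$; the treatment has $q(1/4)=q_1$, $q(3/4)=q_3$. The formulas for $M,Q,m^*,\overline{q}^*$ in the claim are these quantities written out. *)

From Stdlib Require Import Reals.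
Open Scope R_scope.

Definition M (alpha q1 q3 : R) : R :=
  2 * (4 * alpha + 1) / (3 * (1 - q3)) + 2 * (3 - 4 * alpha) / (3 * (1 - q1)).

Definition Q (alpha q1 q3 : R) : R :=
  (q3 * (2 * (4 * alpha + 1) / (3 * (1 - q3)))
   + q1 * (2 * (3 - 4 * alpha) / (3 * (1 - q1)))) / M alpha q1 q3.

Definition mstar (alpha : R) : R := 16 * (4 * alpha + 3) / 9.
Definition qbarstar (alpha : R) : R := (8 * alpha + 3) / (8 * alpha + 6).

(* Summed over engagement levels, the churn flow (1 - q x) m(x,e) of a segment
   is F(x,e)/(1 - e), which does not depend on the algorithm; in total it is 8/3.
   Hence every algorithm with steady-state population m has ARQ
   (m - 8/3)/m = 1 - 8/(3m), a strictly increasing function of m, and comparing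
   ARQs is the same as comparing populations. *)
From Stdlib Require Import Reals Lra.
Open Scope R_scope.

Definition arq_of_population (m : R) : R := 1 - 8 / (3 * m).

Lemma arq_of_population_lt (x y : R) :
  0 < x -> 0 < y -> (arq_of_population x < arq_of_population y <-> x < y).
Proof.
  intros Hx Hy; unfold arq_of_population.
  rewrite !Rdiv_mult_distr.
  split; intro H.
  - destruct (Rlt_or_le x y) as [|Hyx]; [assumption|].
    assert (/ x <= / y) by (apply Rinv_le_contravar; lra).
    lra.
  - assert (/ y < / x) by (apply Rinv_0_lt_contravar; lra).
    lra.
Qed.

Lemma M_gt0 (alpha q1 q3 : R) :
  -1/4 < alpha < 3/4 -> q1 < 1 -> q3 < 1 -> 0 < M alpha q1 q3.
Proof.
  intros Ha H1 H3; unfold M.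
  apply Rplus_lt_0_compat; apply Rdiv_lt_0_compat; lra.
Qed.

Lemma mstar_gt0 (alpha : R) : -3/4 < alpha -> 0 < mstar alpha.
Proof. intros Ha; unfold mstar; lra. Qed.

Lemma Q_arq_of_population (alpha q1 q3 : R) :
  q1 <> 1 -> q3 <> 1 -> M alpha q1 q3 <> 0 ->
  Q alpha q1 q3 = arq_of_population (M alpha q1 q3).
Proof.
  intros H1 H3 HM.
  assert (Hflow : q3 * (2 * (4 * alpha + 1) / (3 * (1 - q3)))
                  + q1 * (2 * (3 - 4 * alpha) / (3 * (1 - q1)))
                  = M alpha q1 q3 - 8 / 3).
  { unfold M; field; split; lra. }
  unfold Q, arq_of_population; rewrite Hflow.
  field; exact HM.
Qed.

Lemma qbarstar_arq_of_population (alpha : R) :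
  4 * alpha + 3 <> 0 -> qbarstar alpha = arq_of_population (mstar alpha).
Proof.
  intros Ha; unfold qbarstar, arq_of_population, mstar.
  field; lra.
Qed.

Theorem proposition1 (alpha q1 q3 : R) :
  0 < alpha < 1 / 2 -> 0 < q1 < 1 -> 0 < q3 < 1 ->
  (M alpha q1 q3 > mstar alpha <-> Q alpha q1 q3 > qbarstar alpha) /\
  (M alpha q1 q3 < mstar alpha <-> Q alpha q1 q3 < qbarstar alpha).
Proof.
  intros Ha H1 H3.
  assert (HM : 0 < M alpha q1 q3) by (apply M_gt0; lra).
  assert (Hm : 0 < mstar alpha) by (apply mstar_gt0; lra).
  rewrite Q_arq_of_population, qbarstar_arq_of_population by lra.
  unfold Rgt; split; symmetry; apply arq_of_population_lt; assumption.
Qed.
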